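(* Let $(\mathcal{A},E,\mathcal{B})$ be an operator-valued $C^*$-probability space and $x_1,x_2,y_1,y_2,w$ self-adjoint elements of $\mathcal{A}$ such that $\mathcal{A}_{\{x_1,x_2\}}\prec\mathcal{A}_w\prec\mathcal{A}_{\{y_1,y_2\}}$ over $\mathcal{B}$. Then for all $n,m\ge0$, $$E\big[(x_1+y_1)^nw(x_2+y_2)^m\big]=\sum_{k=0}^n\sum_{\ell=0}^m\sum_{\substack{q_0,\dots,q_k\ge0\\ q_0+\dots+q_k=n-k}}\sum_{\substack{p_0,\dots,p_\ell\ge0\\ p_0+\dots+p_\ell=m-\ell}}E\Big[E[y_1^{q_0}]x_1E[y_1^{q_1}]\cdots x_1E[y_1^{q_k}]\cdot E[w]\cdot E[y_2^{p_0}]x_2E[y_2^{p_1}]\cdots x_2E[y_2^{p_\ell}]\Big].$$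
   Context: $(\mathcal{A},E,\mathcal{B})$: unital $C^*$-algebra, unital $C^*$-subalgebra $\mathcal{B}$, completely positive conditional expectation $E:\mathcal{A}\to\mathcal{B}$; $y^0$ is interpreted as $1$ (so $E[y^0]=1$). For a set $S\subseteq\mathcal{A}$, $\mathcal{A}_S$ is the (possibly non-unital) $\mathcal{B}$-bimodule subalgebra generated by $S$. Monotone independence $\mathcal{A}_1\prec\mathcal{A}_2\prec\mathcal{A}_3$ over $\mathcal{B}$ means $E[a_1\cdots a_j\cdots a_n]=E[a_1\cdots a_{j-1}E[a_j]a_{j+1}\cdots a_n]$ whenever $a_k\in\mathcal{A}_{i_k}$, $i_k\in\{1,2,3\}$, and $i_{j-1}<i_j>i_{j+1}$ (one inequality dropped at the ends). *)

From mathcomp Require Import all_boot all_order all_algebra.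
Set Implicit Arguments. Unset Strict Implicit. Unset Printing Implicit Defensive.
Import GRing.Theory.
Local Open Scope ring_scope.

(* Algebraic skeleton of an operator-valued probability space (A, E, B):
   A a (unital) ring, B a unital subring (given as a predicate), and
   E : A -> A an additive B-bimodule projection onto B
   (a conditional expectation). *)
Definition cond_expectation (A : nzRingType) (B : pred A) (E : A -> A) : Prop :=
  1 \in B /\
      (forall b c, b \in B -> c \in B -> b + c \in B) /\
      (forall b, b \in B -> - b \in B) /\
      (forall b c, b \in B -> c \in B -> b * c \in B) /\
      (forall a c, E (a + c) = E a + E c) /\
      (forall a, E a \in B) /\
      (forall b, b \in B -> E b = b) /\
      (forall b a c, b \in B -> c \in B -> E (b * a * c) = b * E a * c).

(* A_S : the (possibly non-unital) B-bimodule subalgebra generated by S. *)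
Inductive gen_alg (A : nzRingType) (B : pred A) (S : pred A) : A -> Prop :=
  | gen_base s : s \in S -> gen_alg B S s
  | gen_add a c : gen_alg B S a -> gen_alg B S c -> gen_alg B S (a + c)
  | gen_mul a c : gen_alg B S a -> gen_alg B S c -> gen_alg B S (a * c)
  | gen_lmul b a : b \in B -> gen_alg B S a -> gen_alg B S (b * a)
  | gen_rmul a b : b \in B -> gen_alg B S a -> gen_alg B S (a * b).

(* Monotone independence Alg 1 < Alg 2 < Alg 3 over B (w.r.t. E):
   for every word a_0 ... a_{n-1} with a_k in Alg (idx k), idx k in {1,2,3},
   and every position j that is a local peak (idx (j-1) < idx j > idx (j+1),
   the missing inequality dropped at the ends),
   E[a_0 ... a_{n-1}] = E[a_0 ... E[a_j] ... a_{n-1}]. *)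
Definition monotone3 (A : nzRingType) (E : A -> A) (Alg : nat -> A -> Prop) : Prop :=
  forall (n : nat) (a : nat -> A) (idx : nat -> nat) (j : nat),
    (forall k, (k < n)%N -> (1 <= idx k <= 3)%N /\ Alg (idx k) (a k)) ->
    (j < n)%N ->
    ((0 < j)%N -> (idx j.-1 < idx j)%N) ->
    ((j.+1 < n)%N -> (idx j.+1 < idx j)%N) ->
    E (\prod_(k < n) a k) = E (\prod_(k < n) (if k == j :> nat then E (a k) else a k)).

(* chain E x y [:: q_0; ...; q_k] = E[y^q_0] x E[y^q_1] x ... x E[y^q_k]
   (and 1 for the empty list, which is never used). *)
Definition chain (A : nzRingType) (E : A -> A) (x y : A) (q : seq nat) : A :=
  match q with
  | [::] => 1
  | q0 :: qs => E (y ^+ q0) * \prod_(qi <- qs) (x * E (y ^+ qi))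
  end.

From mathcomp Require Import all_boot all_order all_algebra.
From mathcomp Require Import zify.
Set Implicit Arguments. Unset Strict Implicit. Unset Printing Implicit Defensive.
Import GRing.Theory.
Local Open Scope ring_scope.

(* Expanding (x + y)^n according to the position of the first x isolates a
   maximal power of y flanked by letters of index at most 2 (or by nothing);
   that power is a peak of index 3, so monotone independence replaces it by
   its expectation, and iterating produces the chains
   E[y^q0] x E[y^q1] ... x E[y^qk] indexed by compositions of n - k into
   k + 1 parts.  Doing this for (x1 + y1)^n and then for (x2 + y2)^m leaves w
   as a peak of index 2 between two sums of chains, where it is replaced by
   E[w].  To apply the peak condition inside such mixed expressions we keep
   track of what may stand to the left and to the right of a peak: sums of
   words whose adjacent letter has smaller index, multiplied by elements of B. *)

Fixpoint compositions (k N : nat) : seq (seq nat) :=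
  if k is k'.+1 then [seq j :: t | j <- iota 0 N.+1, t <- compositions k' (N - j)]
  else [:: [:: N]].

Lemma compositionsS k N :
  compositions k.+1 N = [seq j :: t | j <- iota 0 N.+1, t <- compositions k (N - j)].
Proof. by []. Qed.

Lemma mem_compositions k N s :
  (s \in compositions k N) = (size s == k.+1) && (sumn s == N).
Proof.
elim: k N s => [|k IH] N s.
  rewrite inE; case: s => [|a [|b s]] //=; first by rewrite addn0 eqseq_cons andbT.
  by rewrite eqseq_cons andbF.
rewrite compositionsS; apply/flatten_mapP/andP => [[j + /mapP[t + ->]]|].
  rewrite mem_iota IH => hj /andP[/eqP ht /eqP hsum] /=.
  by rewrite ht; split=> //; apply/eqP; lia.
case: s => [|j t] [] // /eqP[ht] /eqP hsum.
have {}hsum : (j + sumn t)%N = N := hsum.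
exists j; first by rewrite mem_iota; lia.
by apply/mapP; exists t; rewrite // IH ht eqxx /=; apply/eqP; lia.
Qed.

Lemma uniq_compositions k N : uniq (compositions k N).
Proof.
elim: k N => [|k IH] N //.
rewrite compositionsS; apply: allpairs_uniq_dep => [|j _|[a b] [c d] _ _ /= [-> ->]//].
  exact: iota_uniq.
exact: IH.
Qed.

Lemma mem_leq_sumn (s : seq nat) x : x \in s -> (x <= sumn s)%N.
Proof. by elim: s => [|a s IH] //=; rewrite inE => /orP[/eqP->|/IH]; lia. Qed.

Lemma big_tuple_compositions (R : nmodType) k N (F : seq nat -> R) :
  \sum_(q : (k.+1).-tuple 'I_N.+1 | (\sum_(i <- q) val i)%N == N) F (map val q)
  = \sum_(s <- compositions k N) F s.
Proof.
rewrite -big_filter -(big_map (fun q : (k.+1).-tuple 'I_N.+1 => map val q) xpredT F).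
apply/perm_big/uniq_perm; last 1 first.
- move=> s; rewrite mem_compositions; apply/mapP/andP => [[q]|[/eqP hs /eqP hsum]].
    rewrite mem_filter => /andP[hq _] ->.
    by rewrite size_map size_tuple sumnE big_map.
  pose t := map (fun i => inord i : 'I_N.+1) s.
  have t_size : size t == k.+1 by rewrite size_map hs.
  have val_t : map val t = s.
    rewrite -map_comp -[RHS]map_id; apply/eq_in_map => x hx /=.
    by rewrite inordK // ltnS -hsum mem_leq_sumn.
  exists (Tuple t_size) => //.
  by rewrite mem_filter mem_index_enum andbT -(big_map val xpredT id) -sumnE val_t hsum.
- rewrite map_inj_uniq ?filter_uniq ?index_enum_uniq //.
  by move=> q1 q2 /(inj_map val_inj) /val_inj.
- exact: uniq_compositions.
Qed.

Lemma triangular_exchange (R : nmodType) n (F : nat -> nat -> R) :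
  \sum_(k < n) \sum_(j < n - k) F k j = \sum_(j < n) \sum_(k < n - j) F k j.
Proof.
rewrite (eq_bigr (fun k : 'I_n => \sum_(j < n | (j < n - k)%N) F k j)); last first.
  by move=> k _; rewrite (big_ord_widen _ _ (leq_subr _ _)).
rewrite (exchange_big_dep xpredT) //=; apply: eq_bigr => j _.
rewrite (big_ord_widen _ (fun k => F k j) (leq_subr j n)).
by apply: eq_bigl => k; lia.
Qed.

Lemma exprD_split_first (A : nzRingType) (x y : A) n :
  (x + y) ^+ n = y ^+ n + \sum_(j < n) y ^+ j * x * (x + y) ^+ (n.-1 - j).
Proof.
elim: n => [|n IH]; first by rewrite !expr0 big_ord0 addr0.
rewrite exprS mulrDl {2}IH mulrDr -exprS big_ord_recl /= expr0 mul1r subn0.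
rewrite mulr_sumr addrCA; congr (_ + (_ + _)); apply: eq_bigr => j _.
by rewrite !mulrA -exprS /bump /= add1n subnS predn_sub.
Qed.

Section ChainSums.
Variables (A : nzRingType) (E : A -> A) (x y : A).

Lemma chain_cons j t : t != [::] -> chain E x y (j :: t) = E (y ^+ j) * x * chain E x y t.
Proof. by case: t => [|t0 ts] // _; rewrite /chain big_cons !mulrA. Qed.

Definition chain_sum n := \sum_(k < n.+1) \sum_(s <- compositions k (n - k)) chain E x y s.

Lemma chain_sum_rec n :
  chain_sum n = E (y ^+ n) + \sum_(j < n) E (y ^+ j) * x * chain_sum (n.-1 - j).
Proof.
rewrite /chain_sum big_ord_recl subn0 big_seq1 /= big_nil mulr1; congr (_ + _).
pose S k N := \sum_(s <- compositions k N) chain E x y s.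
have split_first (k : 'I_n) : S k.+1 (n - k.+1)%N =
    \sum_(j < n - k) E (y ^+ j) * x * S k (n.-1 - k - j)%N.
  rewrite /S compositionsS big_allpairs_dep.
  have -> : (n - k.+1).+1 = (n - k)%N by have := ltn_ord k; lia.
  rewrite -[in iota _ _](subn0 (n - k)%N) -/(index_iota 0 (n - k)) big_mkord.
  apply: eq_bigr => j _.
  rewrite mulr_sumr; have -> : (n - k.+1 - j = n.-1 - k - j)%N by lia.
  apply: eq_big_seq => t; rewrite mem_compositions => /andP[/eqP ht _].
  by rewrite chain_cons // -size_eq0 ht.
rewrite (eq_bigr _ (fun k _ => split_first k)).
rewrite (triangular_exchange n (fun k j => E (y ^+ j) * x * S k (n.-1 - k - j)%N)).
apply: eq_bigr => j _; rewrite mulr_sumr.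
have -> : (n.-1 - j).+1 = (n - j)%N by have := ltn_ord j; lia.
by apply: eq_bigr => k _; congr (_ * S _ _); lia.
Qed.

Lemma chain_sum_tuples n : chain_sum n =
  \sum_(k < n.+1)
    \sum_(q : (k.+1).-tuple 'I_(n - k).+1 | (\sum_(i <- q) val i)%N == (n - k)%N)
      chain E x y (map val q).
Proof. by apply: eq_bigr => k _; rewrite big_tuple_compositions. Qed.

End ChainSums.

Section Words.
Variables (A : nzRingType) (Alg : nat -> A -> Prop).

Definition word_ok (s : seq (nat * A)) : Prop :=
  {in s, forall p, (1 <= p.1 <= 3)%N /\ Alg p.1 p.2}.

Definition word_prod (s : seq (nat * A)) : A := \prod_(p <- s) p.2.

(* The empty word gets index 0, so it never obstructs a peak. *)
Definition last_index (s : seq (nat * A)) : nat := last 0%N (map fst s).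
Definition head_index (s : seq (nat * A)) : nat := head 0%N (map fst s).

Lemma word_ok_nil : word_ok [::].
Proof. by []. Qed.

Lemma word_ok_cat s1 s2 : word_ok s1 -> word_ok s2 -> word_ok (s1 ++ s2).
Proof. by move=> h1 h2 p; rewrite mem_cat => /orP[/h1|/h2]. Qed.

Lemma word_ok_cons p s :
  (1 <= p.1 <= 3)%N -> Alg p.1 p.2 -> word_ok s -> word_ok (p :: s).
Proof. by move=> hi hp hs q; rewrite inE => /orP[/eqP->|/hs]. Qed.

Lemma word_prod_mid s1 i a s2 :
  word_prod (s1 ++ (i, a) :: s2) = word_prod s1 * a * word_prod s2.
Proof. by rewrite /word_prod big_cat big_cons /= mulrA. Qed.

Lemma monotone3_word_peak E s1 i a s2 : monotone3 E Alg ->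
  word_ok s1 -> word_ok s2 -> (1 <= i <= 3)%N -> Alg i a ->
  (last_index s1 < i)%N -> (head_index s2 < i)%N ->
  E (word_prod s1 * a * word_prod s2) = E (word_prod s1 * E a * word_prod s2).
Proof.
move=> hM ok1 ok2 hi ha lt1 lt2; rewrite -!(word_prod_mid _ i).
set w := s1 ++ (i, a) :: s2; pose d := (0%N, 0 : A).
have ok_w : word_ok w by apply: word_ok_cat => //; apply: word_ok_cons.
have w_mid : nth d w (size s1) = (i, a) by rewrite nth_cat ltnn subnn.
have size_w : size w = (size s1 + (size s2).+1)%N by rewrite size_cat.
rewrite /word_prod !(big_nth d) !big_mkord size_cat /= -size_w.
rewrite (hM _ (fun k => (nth d w k).2) (fun k => (nth d w k).1) (size s1)).
- apply: congr1; apply: eq_bigr => k _; rewrite /w !nth_cat.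
  by case: ltngtP => [//|gt|->]; [rewrite -(subnSK gt) | rewrite subnn].
- by move=> k hk; apply/ok_w/mem_nth.
- by rewrite size_w; lia.
- by move=> s1_gt0; rewrite w_mid nth_cat prednK // leqnn nth_last -last_map.
- move=> _; rewrite w_mid /w nth_cat (leq_gtF (leqnSn _)) subSnn /=.
  by case: s2 {ok2 size_w ok_w w w_mid} lt2.
Qed.

End Words.

Section CondExpectation.
Variables (A : nzRingType) (B : pred A) (E : A -> A).
Hypothesis hE : cond_expectation B E.

Lemma ce_mem1 : 1 \in B.
Proof. by case: hE. Qed.

Lemma ce_memM b c : b \in B -> c \in B -> b * c \in B.
Proof. by case: hE => _ [_ [_ [hM _]]]; apply: hM. Qed.

Lemma ce_mem0 : 0 \in B.
Proof. by case: hE => h1 [hD [hN _]]; rewrite -(subrr 1) hD ?hN. Qed.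

Lemma ce_memE a : E a \in B.
Proof. by case: hE => _ [_ [_ [_ [_ [hEB _]]]]]. Qed.

Lemma ce_id b : b \in B -> E b = b.
Proof. by case: hE => _ [_ [_ [_ [_ [_ [hid _]]]]]]; apply: hid. Qed.

Lemma ce_bimodule b a c : b \in B -> c \in B -> E (b * a * c) = b * E a * c.
Proof. by case: hE => _ [_ [_ [_ [_ [_ [_ hbim]]]]]]; apply: hbim. Qed.

Lemma ce_add a c : E (a + c) = E a + E c.
Proof. by case: hE => _ [_ [_ [_ [hadd _]]]]. Qed.

Lemma ce_sum (I : Type) (r : seq I) (P : pred I) (F : I -> A) :
  E (\sum_(i <- r | P i) F i) = \sum_(i <- r | P i) E (F i).
Proof. exact: (big_morph E ce_add (ce_id ce_mem0)). Qed.

End CondExpectation.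

Section MonotoneExpansion.
Variables (A : nzRingType) (B : pred A) (E : A -> A) (Alg : nat -> A -> Prop).
Hypothesis hE : cond_expectation B E.
Hypothesis hM : monotone3 E Alg.
Hypothesis Alg_lmul : forall i b a, b \in B -> Alg i a -> Alg i (b * a).
Hypothesis Alg_rmul : forall i a b, b \in B -> Alg i a -> Alg i (a * b).
Hypothesis Alg_mul : forall i a c, Alg i a -> Alg i c -> Alg i (a * c).

(* Contexts that may stand to the left (right) of a letter of index k in a
   peak: sums of words ending (starting) with indices below k, times an
   element of B. *)
Inductive lspan (k : nat) : A -> Prop :=
  | lspan_word s b : word_ok Alg s -> (last_index s < k)%N -> b \in B ->
      lspan k (word_prod s * b)
  | lspan_add l1 l2 : lspan k l1 -> lspan k l2 -> lspan k (l1 + l2).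

Inductive rspan (k : nat) : A -> Prop :=
  | rspan_word s b : word_ok Alg s -> (head_index s < k)%N -> b \in B ->
      rspan k (b * word_prod s)
  | rspan_add r1 r2 : rspan k r1 -> rspan k r2 -> rspan k (r1 + r2).

Lemma lspan_mono k k' l : (k <= k')%N -> lspan k l -> lspan k' l.
Proof.
move=> hk; elim=> [s b ok hs hb|l1 l2 _ IH1 _ IH2]; last exact: lspan_add.
by apply: lspan_word => //; apply: leq_trans hk.
Qed.

Lemma rspan_mono k k' r : (k <= k')%N -> rspan k r -> rspan k' r.
Proof.
move=> hk; elim=> [s b ok hs hb|r1 r2 _ IH1 _ IH2]; last exact: rspan_add.
by apply: rspan_word => //; apply: leq_trans hk.
Qed.

Lemma lspanB k b : (0 < k)%N -> b \in B -> lspan k b.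
Proof.
by move=> hk hb; have := lspan_word (word_ok_nil _) hk hb; rewrite /word_prod big_nil mul1r.
Qed.

Lemma rspanB k b : (0 < k)%N -> b \in B -> rspan k b.
Proof.
by move=> hk hb; have := rspan_word (word_ok_nil _) hk hb; rewrite /word_prod big_nil mulr1.
Qed.

Lemma lspan_mulB k l b : b \in B -> lspan k l -> lspan k (l * b).
Proof.
move=> hb; elim=> [s b' ok hs hb'|l1 l2 _ IH1 _ IH2]; last by rewrite mulrDl; apply: lspan_add.
by rewrite -mulrA; apply: lspan_word => //; apply: (ce_memM hE).
Qed.

Lemma rspan_Bmul k r b : b \in B -> rspan k r -> rspan k (b * r).
Proof.
move=> hb; elim=> [s b' ok hs hb'|r1 r2 _ IH1 _ IH2]; last by rewrite mulrDr; apply: rspan_add.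
by rewrite mulrA; apply: rspan_word => //; apply: (ce_memM hE).
Qed.

Lemma lspan_mulA k i l a : (1 <= i <= 3)%N -> Alg i a -> lspan k l -> lspan i.+1 (l * a).
Proof.
move=> hi ha; elim=> [s b ok hs hb|l1 l2 _ IH1 _ IH2]; last by rewrite mulrDl; apply: lspan_add.
have -> : word_prod s * b * a = word_prod (rcons s (i, b * a)) * 1.
  by rewrite mulr1 -cats1 /word_prod big_cat big_seq1 /= mulrA.
apply: lspan_word (ce_mem1 hE); last by rewrite /last_index map_rcons last_rcons.
by rewrite -cats1; apply/word_ok_cat/word_ok_cons/word_ok_nil => //; apply: Alg_lmul.
Qed.

Lemma rspan_Amul k i r a : (1 <= i <= 3)%N -> Alg i a -> rspan k r -> rspan i.+1 (a * r).
Proof.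
move=> hi ha; elim=> [s b ok hs hb|r1 r2 _ IH1 _ IH2]; last by rewrite mulrDr; apply: rspan_add.
have -> : a * (b * word_prod s) = 1 * word_prod ((i, a * b) :: s).
  by rewrite mul1r /word_prod big_cons /= mulrA.
by apply: rspan_word (ce_mem1 hE) => //; apply: word_ok_cons => //; apply: Alg_rmul.
Qed.

Lemma lspan_sum k (I : Type) (rI : seq I) (P : pred I) (F : I -> A) :
  (0 < k)%N -> (forall i, P i -> lspan k (F i)) -> lspan k (\sum_(i <- rI | P i) F i).
Proof. by move=> hk hF; apply: big_ind => //; [apply: lspanB (ce_mem0 hE)|apply: lspan_add]. Qed.

Lemma rspan_sum k (I : Type) (rI : seq I) (P : pred I) (F : I -> A) :
  (0 < k)%N -> (forall i, P i -> rspan k (F i)) -> rspan k (\sum_(i <- rI | P i) F i).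
Proof. by move=> hk hF; apply: big_ind => //; [apply: rspanB (ce_mem0 hE)|apply: rspan_add]. Qed.

Lemma monotone3_span_peak i a l r : (1 <= i <= 3)%N -> Alg i a ->
  lspan i l -> rspan i r -> E (l * a * r) = E (l * E a * r).
Proof.
move=> hi ha hl; elim: hl r => [s b ok hs hb|l1 l2 _ IH1 _ IH2] r hr; last first.
  by rewrite !mulrDl !(ce_add hE) IH1 ?IH2.
elim: hr => [s' b' ok' hs' hb'|r1 r2 _ IHa _ IHb]; last by rewrite !mulrDr !(ce_add hE) IHa IHb.
have regroup c : word_prod s * b * c * (b' * word_prod s') =
    word_prod s * (b * c * b') * word_prod s' by rewrite !mulrA.
rewrite !regroup (monotone3_word_peak hM ok ok' hi _ hs hs'); last exact/Alg_rmul/Alg_lmul.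
by rewrite (ce_bimodule hE _ hb hb').
Qed.

Lemma Alg_exp i y j : Alg i y -> Alg i (y ^+ j.+1).
Proof. by move=> hy; elim: j => [|j IH]; rewrite ?expr1 // exprS; apply: Alg_mul. Qed.

Lemma rspan_exprD x y m t :
  Alg 1 x -> Alg 3 y -> rspan 4 t -> rspan 4 ((x + y) ^+ m * t).
Proof.
move=> hx hy ht; elim: m => [|m IH]; first by rewrite expr0 mul1r.
rewrite exprS -mulrA mulrDl; apply: rspan_add; last exact: rspan_Amul IH.
by apply: (@rspan_mono 2) => //; apply: rspan_Amul IH.
Qed.

Lemma monotone3_exp_peak y j l r : Alg 3 y -> lspan 3 l -> rspan 3 r ->
  E (l * y ^+ j * r) = E (l * E (y ^+ j) * r).
Proof.
case: j => [|j] hy hl hr; first by rewrite expr0 (ce_id hE (ce_mem1 hE)).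
exact: (monotone3_span_peak _ (Alg_exp _ hy)).
Qed.

Lemma expectation_exprD x y n l t : Alg 1 x -> Alg 3 y -> lspan 3 l -> rspan 3 t ->
  E (l * (x + y) ^+ n * t) = E (l * chain_sum E x y n * t).
Proof.
move=> hx hy; elim/ltn_ind: n l t => n IH l t hl ht.
rewrite exprD_split_first chain_sum_rec !mulrDr !mulrDl !(ce_add hE).
congr (_ + _); first exact: monotone3_exp_peak.
rewrite !mulr_sumr !mulr_suml !(ce_sum hE); apply: eq_bigr => j _.
have rest : rspan 3 (x * ((x + y) ^+ (n.-1 - j) * t)).
  apply: (@rspan_mono 2) => //; apply: (@rspan_Amul 4) => //.
  exact/rspan_exprD/(rspan_mono _ ht).
have head : lspan 3 (l * E (y ^+ j) * x).
  apply: (@lspan_mono 2) => //; apply: lspan_mulA hx _ => //.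
  exact: lspan_mulB (ce_memE hE _) hl.
have -> : l * (y ^+ j * x * (x + y) ^+ (n.-1 - j)) * t =
    l * y ^+ j * (x * ((x + y) ^+ (n.-1 - j) * t)) by rewrite !mulrA.
by rewrite monotone3_exp_peak // !mulrA IH //; have := ltn_ord j; lia.
Qed.

Lemma lspan_chain x y s : Alg 1 x -> lspan 2 (chain E x y s).
Proof.
move=> hx; case: s => [|q0 qs] /=; first exact: lspanB (ce_mem1 hE).
elim: qs (E (y ^+ q0)) (@lspanB 2 _ isT (ce_memE hE (y ^+ q0))) => [|q qs IH] l hl.
  by rewrite big_nil mulr1.
rewrite big_cons mulrA; apply: IH; rewrite mulrA.
by apply: lspan_mulB (ce_memE hE _) _; apply: lspan_mulA hx hl.
Qed.

Lemma rspan_chain x y s : Alg 1 x -> rspan 2 (chain E x y s).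
Proof.
move=> hx; case: s => [|q0 qs] /=; first exact: rspanB (ce_mem1 hE).
apply: rspan_Bmul (ce_memE hE _) _; elim: qs => [|q qs IH].
  by rewrite big_nil; apply: rspanB (ce_mem1 hE).
by rewrite big_cons; apply: (@rspan_Amul 2) IH => //; apply: Alg_rmul (ce_memE hE _) hx.
Qed.

Theorem expectation_sandwich x1 x2 y1 y2 w n m :
  Alg 1 x1 -> Alg 1 x2 -> Alg 3 y1 -> Alg 3 y2 -> Alg 2 w ->
  E ((x1 + y1) ^+ n * w * (x2 + y2) ^+ m) =
  E (chain_sum E x1 y1 n * E w * chain_sum E x2 y2 m).
Proof.
move=> hx1 hx2 hy1 hy2 hw.
have B1 := ce_mem1 hE.
have left1 : lspan 3 1 by apply: lspanB.
have right1 : rspan 3 1 by apply: rspanB.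
have left_chains : lspan 2 (chain_sum E x1 y1 n).
  by apply: lspan_sum => // k _; apply: lspan_sum => // s _; apply: lspan_chain.
have left_w : lspan 3 (chain_sum E x1 y1 n * w) by apply: lspan_mulA left_chains.
have right_chains : rspan 2 (chain_sum E x2 y2 m).
  by apply: rspan_sum => // k _; apply: rspan_sum => // s _; apply: rspan_chain.
have right_w : rspan 3 (w * (x2 + y2) ^+ m).
  apply: (@rspan_Amul 4) => //; rewrite -[_ ^+ m]mulr1.
  exact/rspan_exprD/rspanB.
have -> : (x1 + y1) ^+ n * w * (x2 + y2) ^+ m = 1 * (x1 + y1) ^+ n * (w * (x2 + y2) ^+ m).
  by rewrite mul1r mulrA.
rewrite expectation_exprD // mul1r mulrA -[_ * _ ^+ m]mulr1 expectation_exprD //.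
by rewrite mulr1 (@monotone3_span_peak 2).
Qed.

End MonotoneExpansion.

Theorem lemma3p3 (A : nzRingType) (B : pred A) (E : A -> A)
    (x1 x2 y1 y2 w : A) :
  cond_expectation B E ->
  monotone3 E (fun i => if i == 1%N then gen_alg B (pred2 x1 x2)
                        else if i == 2%N then gen_alg B (pred1 w)
                        else gen_alg B (pred2 y1 y2)) ->
  forall n m : nat,
    E (((x1 + y1) ^+ n) * w * ((x2 + y2) ^+ m)) =
    \sum_(k < n.+1) \sum_(l < m.+1)
      \sum_(q : (k.+1).-tuple 'I_(n - k).+1 | (\sum_(i <- q) val i)%N == (n - k)%N)
      \sum_(p : (l.+1).-tuple 'I_(m - l).+1 | (\sum_(i <- p) val i)%N == (m - l)%N)
        E (chain E x1 y1 (map val q) * E w * chain E x2 y2 (map val p)).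
Proof.
move=> hE hM n m; set Alg := (fun i => _) in hM.
have Alg_lmul i b a : b \in B -> Alg i a -> Alg i (b * a).
  by rewrite /Alg; case: ifP => _; [|case: ifP => _]; exact: gen_lmul.
have Alg_rmul i a b : b \in B -> Alg i a -> Alg i (a * b).
  by rewrite /Alg; case: ifP => _; [|case: ifP => _]; exact: gen_rmul.
have Alg_mul i a c : Alg i a -> Alg i c -> Alg i (a * c).
  by rewrite /Alg; case: ifP => _; [|case: ifP => _]; exact: gen_mul.
rewrite (expectation_sandwich hE hM Alg_lmul Alg_rmul Alg_mul);
  try by apply: gen_base; rewrite !inE eqxx ?orbT.
rewrite !chain_sum_tuples !mulr_suml (ce_sum hE); apply: eq_bigr => k _.
rewrite [RHS]exchange_big /= !mulr_suml (ce_sum hE); apply: eq_bigr => q _.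
rewrite mulr_sumr (ce_sum hE); apply: eq_bigr => l _.
by rewrite mulr_sumr (ce_sum hE).
Qed.
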